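(* Let $X$ be any object of $\mathsf{SquaMS}$, let $m\in M$ and $x,y\in X$. Then every finite path $(m,x)=z_0,z_1,\dots,z_k=(m,y)$ in $M\times X$ has score at least $\frac13 d_X(x,y)$.
   Context: Let $M_0=\{(r,s)\in[0,1]^2: r\in\{0,1\}\text{ or } s\in\{0,1\}\}$. A square metric space is a pair $(X,S_X)$ with $X$ a metric space with all distances at most $2$ and $S_X\colon M_0\to X$ injective such that (sq1) for $i\in\{0,1\}$, $r,s\in[0,1]$: $d_X(S_X(i,r),S_X(i,s))=|s-r|$ and $d_X(S_X(r,i),S_X(s,i))=|s-r|$; (sq2) $d_X(S_X(r,s),S_X(t,u))\ge|r-t|+|s-u|$; $\mathsf{SquaMS}$ is the category of these. Let $N=\{0,1,2\}^2$, $M=N\setminus\{(1,1)\}$, also viewed as points of $\mathbb{R}^2$. Let $\sim$ be the equivalence relation on $M\times X$ generated by $(m,S_X(p))\sim(n,S_X(q))$ whenever $m,n\in M$ differ by exactly $1$ in exactly one coordinate and $(m+p)/3=(n+q)/3$. On $M\times X$ let $d((a,u),(b,v))=\frac13 d_X(u,v)$ if $a=b$ and $2$ otherwise. The score of a finite path $z_0,\dots,z_k$ in $M\times X$ is $\sum_{i<k}c_i$, where $c_i=0$ if $z_i\sim z_{i+1}$ and $c_i=d(z_i,z_{i+1})$ otherwise. *)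

From Stdlib Require Import Reals Lra Lia Relations ClassicalEpsilon.
Open Scope R_scope.

Definition inM0 (r s : R) : Prop :=
  0 <= r <= 1 /\ 0 <= s <= 1 /\ (r = 0 \/ r = 1 \/ s = 0 \/ s = 1).

(* Objects of SquaMS: a metric space with all distances <= 2 together with
   S : M_0 -> X (given as a function R -> R -> X, only its values on M_0
   matter) injective on M_0 and satisfying (sq1), (sq2). *)
Record SquaMS := {
  carrier :> Type;
  dX : carrier -> carrier -> R;
  dX_nonneg : forall x y, 0 <= dX x y;
  dX_eq0 : forall x y, dX x y = 0 <-> x = y;
  dX_sym : forall x y, dX x y = dX y x;
  dX_tri : forall x y z, dX x z <= dX x y + dX y z;
  dX_le2 : forall x y, dX x y <= 2;
  SX : R -> R -> carrier;
  S_inj : forall r s t u, inM0 r s -> inM0 t u -> SX r s = SX t u -> r = t /\ s = u;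
  sq1 : forall i r s, (i = 0 \/ i = 1) -> 0 <= r <= 1 -> 0 <= s <= 1 ->
        dX (SX i r) (SX i s) = Rabs (s - r) /\ dX (SX r i) (SX s i) = Rabs (s - r);
  sq2 : forall r s t u, inM0 r s -> inM0 t u ->
        dX (SX r s) (SX t u) >= Rabs (r - t) + Rabs (s - u)
}.

Definition inMb (m : nat * nat) : bool :=
  (Nat.leb (fst m) 2 && Nat.leb (snd m) 2 &&
   negb (Nat.eqb (fst m) 1 && Nat.eqb (snd m) 1))%bool.

Definition M : Type := { m : nat * nat | inMb m = true }.
Definition Mx (m : M) : nat := fst (proj1_sig m).
Definition My (m : M) : nat := snd (proj1_sig m).

Definition adjacent (m n : M) : Prop :=
  ((Mx m = Datatypes.S (Mx n) \/ Mx n = Datatypes.S (Mx m)) /\ My m = My n) \/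
  ((My m = Datatypes.S (My n) \/ My n = Datatypes.S (My m)) /\ Mx m = Mx n).

Section Glue.
Variable X : SquaMS.

Definition gen_rel (z w : M * X) : Prop :=
  exists (m n : M) (p1 p2 q1 q2 : R),
    adjacent m n /\ inM0 p1 p2 /\ inM0 q1 q2 /\
    z = (m, SX X p1 p2) /\ w = (n, SX X q1 q2) /\
    (INR (Mx m) + p1) / 3 = (INR (Mx n) + q1) / 3 /\
    (INR (My m) + p2) / 3 = (INR (My n) + q2) / 3.

Definition glue_equiv : M * X -> M * X -> Prop :=
  clos_refl_sym_trans (M * X) gen_rel.

Definition dMX (z w : M * X) : R :=
  if (Nat.eqb (Mx (fst z)) (Mx (fst w)) && Nat.eqb (My (fst z)) (My (fst w)))%bool
  then dX X (snd z) (snd w) / 3 else 2.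

Definition step_cost (z w : M * X) : R :=
  if excluded_middle_informative (glue_equiv z w) then 0 else dMX z w.

Fixpoint score (z : nat -> M * X) (k : nat) : R :=
  match k with
  | O => 0
  | Datatypes.S k' => score z k' + step_cost (z k') (z k)
  end.
End Glue.

From Stdlib Require Import Reals Lra Lia ClassicalEpsilon Eqdep_dec.
Open Scope R_scope.

(* Fix the copy m and the point x.  We build a potential F on M x X that is
   constant on ~-classes, takes values in [0,2], is 1-Lipschitz for d_X on
   every copy, and equals d_X(x, .) on the copy m.  Every step of a path then
   changes F by at most 3 c_i, and telescoping gives
   d_X(x,y) = |F(m,x) - F(m,y)| <= 3 * score.

   On a copy a <> m, F is the McShane extension, capped at 2, of a function on
   the boundary S(M_0) of a.  At a boundary point q, with P = a + q the
   corresponding point of the plane, this function is the least cost of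
   leaving m through one of its sides s: d_X(x, S(e)) for the point e of s
   nearest to P, plus the L1 distance from e to P, capped at 2.  By (sq1) each
   cost is L1-Lipschitz in P, hence by (sq2) d_X-Lipschitz on S(M_0).  A side
   s is only offered to a if s is glued to a neighbour of m and a lies beyond
   s; since the centre (1,1) is missing, wherever this offer changes between
   two glued copies the capped cost is already 2, so the boundary functions
   agree at glued points. *)

Lemma Rabs_bounds (t : R) : - Rabs t <= t <= Rabs t.
Proof. unfold Rabs; destruct (Rcase_abs t); lra. Qed.

Lemma Rmin_le_add (c a b e : R) : a <= b + e -> 0 <= e -> Rmin c a <= Rmin c b + e.
Proof. intros; unfold Rmin; repeat destruct Rle_dec; lra. Qed.

Definition clamp01 (t : R) : R := Rmax 0 (Rmin 1 t).

Lemma clamp01_cases (t : R) :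
  (t <= 0 /\ clamp01 t = 0) \/ (0 <= t <= 1 /\ clamp01 t = t) \/
  (1 <= t /\ clamp01 t = 1).
Proof. unfold clamp01, Rmax, Rmin; repeat destruct Rle_dec; lra. Qed.

Lemma clamp01_range (t : R) : 0 <= clamp01 t <= 1.
Proof. destruct (clamp01_cases t) as [[? ->]|[[? ->]|[? ->]]]; lra. Qed.

Lemma clamp01_id (t : R) : 0 <= t <= 1 -> clamp01 t = t.
Proof. intros; destruct (clamp01_cases t) as [[? ->]|[[? ->]|[? ->]]]; lra. Qed.

Lemma clamp01_far (t : R) : t <= -1 \/ 2 <= t -> 1 <= Rabs (t - clamp01 t).
Proof.
  intros Ht; destruct (clamp01_cases t) as [[? ->]|[[? ->]|[? ->]]];
  pose proof (Rabs_bounds (t - 0)); pose proof (Rabs_bounds (t - 1)); lra.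
Qed.

Lemma clamp01_lipschitz (t t' : R) :
  Rabs (clamp01 t - clamp01 t') + Rabs (Rabs (t - clamp01 t) - Rabs (t' - clamp01 t'))
  <= Rabs (t - t').
Proof.
  destruct (clamp01_cases t) as [[? ->]|[[? ->]|[? ->]]];
  destruct (clamp01_cases t') as [[? ->]|[[? ->]|[? ->]]];
  unfold Rabs; repeat destruct Rcase_abs; lra.
Qed.

(* [h (clamp01 t)] plus the L1 distance from [(n, t)] to its nearest point
   [(0, clamp01 t)] on the segment [{0} x [0,1]]. *)
Definition clamped_route (h : R -> R) (n t : R) : R :=
  h (clamp01 t) + Rabs n + Rabs (t - clamp01 t).

Lemma clamped_route_lipschitz (h : R -> R) :
  (forall t t', 0 <= t <= 1 -> 0 <= t' <= 1 -> Rabs (h t - h t') <= Rabs (t - t')) ->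
  forall n t n' t',
  Rabs (clamped_route h n t - clamped_route h n' t') <= Rabs (n - n') + Rabs (t - t').
Proof.
  intros Hh n t n' t'; unfold clamped_route.
  pose proof (Hh _ _ (clamp01_range t) (clamp01_range t')).
  pose proof (clamp01_lipschitz t t').
  pose proof (Rabs_triang_inv2 n n').
  pose proof (Rabs_bounds (h (clamp01 t) - h (clamp01 t'))).
  pose proof (Rabs_bounds (Rabs n - Rabs n')).
  pose proof (Rabs_bounds (Rabs (t - clamp01 t) - Rabs (t' - clamp01 t'))).
  apply Rabs_le; lra.
Qed.

Lemma dX_self (X : SquaMS) (u : X) : dX X u u = 0.
Proof. now apply dX_eq0. Qed.

Lemma dX_lipschitz (X : SquaMS) (x u v : X) : Rabs (dX X x u - dX X x v) <= dX X u v.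
Proof.
  pose proof (dX_tri X x u v); pose proof (dX_tri X x v u); rewrite (dX_sym X v u) in *.
  apply Rabs_le; lra.
Qed.

Lemma SX_dist_vertical (X : SquaMS) (i r s : R) :
  i = 0 \/ i = 1 -> 0 <= r <= 1 -> 0 <= s <= 1 -> dX X (SX X i r) (SX X i s) = Rabs (s - r).
Proof. intros; apply sq1; assumption. Qed.

Lemma SX_dist_horizontal (X : SquaMS) (i r s : R) :
  i = 0 \/ i = 1 -> 0 <= r <= 1 -> 0 <= s <= 1 -> dX X (SX X r i) (SX X s i) = Rabs (s - r).
Proof. intros; apply sq1; assumption. Qed.

(** * Routes through a side of the unit square *)

Definition unit_square (p1 p2 : R) : Prop := 0 <= p1 <= 1 /\ 0 <= p2 <= 1.

Lemma inM0_unit_square (r s : R) : inM0 r s -> unit_square r s.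
Proof. intros (Hr & Hs & _); split; assumption. Qed.

Inductive side := Left | Right | Bottom | Top.

Definition normal_offset (s : side) (u v : R) : R :=
  match s with Left => u | Right => u - 1 | Bottom => v | Top => v - 1 end.

Definition tangent_coord (s : side) (u v : R) : R :=
  match s with Left | Right => v | Bottom | Top => u end.

Section Routes.
Variable X : SquaMS.
Variable x : X.

Definition side_point (s : side) (t : R) : X :=
  match s with
  | Left => SX X 0 t | Right => SX X 1 t | Bottom => SX X t 0 | Top => SX X t 1
  end.

Definition route (s : side) (u v : R) : R :=
  clamped_route (fun t => dX X x (side_point s t)) (normal_offset s u v) (tangent_coord s u v).

Lemma side_point_dist s t t' :
  0 <= t <= 1 -> 0 <= t' <= 1 -> dX X (side_point s t) (side_point s t') = Rabs (t - t').
Proof.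
  intros; rewrite Rabs_minus_sym.
  destruct s; simpl; first [apply SX_dist_vertical | apply SX_dist_horizontal]; lra.
Qed.

Lemma route_lipschitz s u v u' v' :
  Rabs (route s u v - route s u' v') <= Rabs (u - u') + Rabs (v - v').
Proof.
  assert (Hsplit : Rabs (normal_offset s u v - normal_offset s u' v')
                   + Rabs (tangent_coord s u v - tangent_coord s u' v')
                   = Rabs (u - u') + Rabs (v - v')).
  { destruct s; simpl;
    try replace (u - 1 - (u' - 1)) with (u - u') by ring;
    try replace (v - 1 - (v' - 1)) with (v - v') by ring; ring. }
  rewrite <- Hsplit; apply clamped_route_lipschitz.
  intros t t' Ht Ht'; rewrite <- (side_point_dist s t t') by assumption; apply dX_lipschitz.
Qed.

Lemma route_ge_offsets s u v :
  Rabs (normal_offset s u v) + Rabs (tangent_coord s u v - clamp01 (tangent_coord s u v))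
  <= route s u v.
Proof.
  unfold route, clamped_route.
  pose proof (dX_nonneg X x (side_point s (clamp01 (tangent_coord s u v)))); lra.
Qed.

Lemma route_nonneg s u v : 0 <= route s u v.
Proof.
  pose proof (route_ge_offsets s u v); pose proof (Rabs_pos (normal_offset s u v));
  pose proof (Rabs_pos (tangent_coord s u v - clamp01 (tangent_coord s u v))); lra.
Qed.

Lemma route_in_square s p1 p2 : unit_square p1 p2 ->
  route s p1 p2 = dX X x (side_point s (tangent_coord s p1 p2)) + Rabs (normal_offset s p1 p2).
Proof.
  intros [H1 H2]; unfold route, clamped_route.
  rewrite clamp01_id by (destruct s; simpl; lra).
  rewrite Rminus_diag, Rabs_R0; ring.
Qed.

Lemma side_foot_dist s p1 p2 : unit_square p1 p2 ->
  normal_offset s p1 p2 = 0 \/ tangent_coord s p1 p2 = 0 \/ tangent_coord s p1 p2 = 1 ->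
  dX X (side_point s (tangent_coord s p1 p2)) (SX X p1 p2) = Rabs (normal_offset s p1 p2).
Proof.
  intros [H1 H2] Hs.
  destruct s; simpl in *; destruct Hs as [Hs|[Hs|Hs]];
  first [ assert (p1 = 0) by lra | assert (p1 = 1) by lra
        | assert (p2 = 0) by lra | assert (p2 = 1) by lra ]; subst;
  first [ rewrite SX_dist_vertical by lra | rewrite SX_dist_horizontal by lra ];
  f_equal; ring.
Qed.

Lemma route_ge_dist s p1 p2 : unit_square p1 p2 ->
  normal_offset s p1 p2 = 0 \/ tangent_coord s p1 p2 = 0 \/ tangent_coord s p1 p2 = 1 ->
  dX X x (SX X p1 p2) <= route s p1 p2.
Proof.
  intros; rewrite route_in_square, <- side_foot_dist by assumption; apply dX_tri.
Qed.

Lemma route_on_side s p1 p2 : unit_square p1 p2 ->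
  normal_offset s p1 p2 = 0 -> route s p1 p2 = dX X x (SX X p1 p2).
Proof.
  intros Hsq Hn.
  assert (Hfoot : side_point s (tangent_coord s p1 p2) = SX X p1 p2).
  { apply dX_eq0; rewrite side_foot_dist, Hn by auto; apply Rabs_R0. }
  rewrite route_in_square, Hfoot, Hn, Rabs_R0 by assumption; ring.
Qed.

End Routes.

(** * McShane extension *)

Section McShane.
Variables (X : SquaMS) (I : Type) (A : I -> Prop) (e : I -> X) (f : I -> R).
Hypothesis f_nonneg : forall i, A i -> 0 <= f i.
Variable i0 : I.
Hypothesis A_i0 : A i0.

Definition mcshane_values (w : X) (t : R) : Prop :=
  exists i, A i /\ t = - (f i + dX X w (e i)).

Lemma mcshane_values_bound w : bound (mcshane_values w).
Proof.
  exists 0; intros t (i & Hi & ->).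
  pose proof (f_nonneg i Hi); pose proof (dX_nonneg X w (e i)); lra.
Qed.

Lemma mcshane_values_inhabited w : exists t, mcshane_values w t.
Proof. eexists; exists i0; split; [exact A_i0 | reflexivity]. Qed.

(* [inf_{A i} (f i + d(w, e i))], written as a negated supremum. *)
Definition mcshane (w : X) : R :=
  - proj1_sig (completeness _ (mcshane_values_bound w) (mcshane_values_inhabited w)).

Lemma mcshane_le w i : A i -> mcshane w <= f i + dX X w (e i).
Proof.
  intros Hi; unfold mcshane; destruct completeness as [l Hl]; simpl.
  enough (- (f i + dX X w (e i)) <= l) by lra.
  apply (proj1 Hl); exists i; auto.
Qed.

Lemma mcshane_ge w c : (forall i, A i -> c <= f i + dX X w (e i)) -> c <= mcshane w.
Proof.
  intros Hc; unfold mcshane; destruct completeness as [l Hl]; simpl.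
  enough (l <= - c) by lra.
  apply (proj2 Hl); intros t (i & Hi & ->); specialize (Hc i Hi); lra.
Qed.

Lemma mcshane_nonneg w : 0 <= mcshane w.
Proof.
  apply mcshane_ge; intros i Hi.
  pose proof (f_nonneg i Hi); pose proof (dX_nonneg X w (e i)); lra.
Qed.

Lemma mcshane_lipschitz w w' : mcshane w <= mcshane w' + dX X w w'.
Proof.
  enough (mcshane w - dX X w w' <= mcshane w') by lra.
  apply mcshane_ge; intros i Hi.
  pose proof (mcshane_le w i Hi); pose proof (dX_tri X w w' (e i)); lra.
Qed.

Lemma mcshane_extends i :
  (forall j k, A j -> A k -> f j <= f k + dX X (e j) (e k)) -> A i -> mcshane (e i) = f i.
Proof.
  intros Hf Hi; apply Rle_antisym.
  - pose proof (mcshane_le (e i) i Hi); rewrite dX_self in *; lra.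
  - apply mcshane_ge; intros j Hj; apply Hf; assumption.
Qed.

End McShane.

Arguments mcshane {X I} A e f f_nonneg {i0} A_i0 w.

Definition inM (i j : nat) : Prop := (i <= 2 /\ j <= 2 /\ ~ (i = 1 /\ j = 1))%nat.

Lemma M_inM (a : M) : inM (Mx a) (My a).
Proof.
  destruct a as [[i j] H]; unfold Mx, My, inM; simpl.
  destruct i as [|[|[|i]]], j as [|[|[|j]]]; simpl in H; try discriminate; lia.
Qed.

Lemma adjacent_sym (a b : M) : adjacent a b -> adjacent b a.
Proof. unfold adjacent; lia. Qed.

Lemma adjacent_irrefl (a : M) : ~ adjacent a a.
Proof. unfold adjacent; lia. Qed.

Definition same_copy (a b : M) : bool :=
  (Nat.eqb (Mx a) (Mx b) && Nat.eqb (My a) (My b))%bool.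

Lemma same_copy_spec (a b : M) : reflect (a = b) (same_copy a b).
Proof.
  apply Bool.iff_reflect; split.
  - intros ->; unfold same_copy; now rewrite !Nat.eqb_refl.
  - destruct a as [[i j] Ha], b as [[k l] Hb]; unfold same_copy, Mx, My; simpl.
    rewrite Bool.andb_true_iff, !Nat.eqb_eq; intros [-> ->].
    f_equal; apply UIP_dec, Bool.bool_dec.
Qed.

Lemma M_neq_coords (a b : M) : a <> b -> ~ (Mx a = Mx b /\ My a = My b)%nat.
Proof.
  intros Hab [Hx Hy]; apply Hab.
  apply (Bool.reflect_iff _ _ (same_copy_spec a b)).
  unfold same_copy; now rewrite Hx, Hy, !Nat.eqb_refl.
Qed.

Lemma middle_column_far (a b : M) :
  Mx a = Mx b -> Mx b = 1%nat -> a <> b -> (My a = My b + 2 \/ My b = My a + 2)%nat.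
Proof.
  intros Hx H1 Hab; apply M_neq_coords in Hab.
  pose proof (M_inM a); pose proof (M_inM b); unfold inM in *; lia.
Qed.

Lemma middle_row_far (a b : M) :
  My a = My b -> My b = 1%nat -> a <> b -> (Mx a = Mx b + 2 \/ Mx b = Mx a + 2)%nat.
Proof.
  intros Hy H1 Hab; apply M_neq_coords in Hab.
  pose proof (M_inM a); pose proof (M_inM b); unfold inM in *; lia.
Qed.

Definition same_point (a : M) (p1 p2 : R) (b : M) (q1 q2 : R) : Prop :=
  INR (Mx a) + p1 = INR (Mx b) + q1 /\ INR (My a) + p2 = INR (My b) + q2.

Lemma same_point_sym a p1 p2 b q1 q2 : same_point a p1 p2 b q1 q2 -> same_point b q1 q2 a p1 p2.
Proof. unfold same_point; intros [? ?]; split; lra. Qed.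

Lemma contact_cases (a b : M) (p1 p2 q1 q2 : R) :
  adjacent a b -> unit_square p1 p2 -> unit_square q1 q2 -> same_point a p1 p2 b q1 q2 ->
  ((Mx a = S (Mx b) /\ p1 = 0 \/ Mx b = S (Mx a) /\ p1 = 1) /\ My a = My b /\ p2 = q2) \/
  ((My a = S (My b) /\ p2 = 0 \/ My b = S (My a) /\ p2 = 1) /\ Mx a = Mx b /\ p1 = q1).
Proof.
  intros Hadj [Hp1 Hp2] [Hq1 Hq2] [E1 E2].
  destruct Hadj as [[[Hx|Hx] Hy]|[[Hy|Hy] Hx]];
  rewrite Hx, ?S_INR in E1; rewrite Hy, ?S_INR in E2;
  [left; split; [left | split] | left; split; [right | split]
  | right; split; [left | split] | right; split; [right | split]];
  try split; auto; lra.
Qed.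

Lemma far_offset (i j : nat) (p : R) :
  0 <= p <= 1 -> (i = j + 2 \/ j = i + 2)%nat ->
  1 <= Rabs ((INR i + p - INR j) - clamp01 (INR i + p - INR j)).
Proof.
  intros Hp [->| ->]; apply clamp01_far; rewrite plus_INR; simpl; lra.
Qed.

(** * The boundary potential of a copy *)

Definition min_sides (f : side -> R) : R :=
  Rmin (Rmin (f Left) (f Right)) (Rmin (f Bottom) (f Top)).

Lemma min_sides_le f s : min_sides f <= f s.
Proof. unfold min_sides, Rmin; repeat destruct Rle_dec; destruct s; lra. Qed.

Lemma min_sides_ge f c : (forall s, c <= f s) -> c <= min_sides f.
Proof. intros H; unfold min_sides; repeat apply Rmin_glb; apply H. Qed.

Lemma min_sides_le_add f g c : (forall s, f s <= g s + c) -> min_sides f <= min_sides g + c.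
Proof.
  intros H; enough (min_sides f - c <= min_sides g) by lra.
  apply min_sides_ge; intros s; pose proof (H s); pose proof (min_sides_le f s); lra.
Qed.

Lemma min_sides_ext f g : (forall s, f s = g s) -> min_sides f = min_sides g.
Proof. intros H; unfold min_sides; now rewrite !H. Qed.

Section BoundaryPotential.
Variables (X : SquaMS) (x : X) (m : M).

Definition side_glued (s : side) : Prop :=
  match s with
  | Left => (1 <= Mx m /\ inM (Mx m - 1) (My m))%nat
  | Right => inM (S (Mx m)) (My m)
  | Bottom => (1 <= My m /\ inM (Mx m) (My m - 1))%nat
  | Top => inM (Mx m) (S (My m))
  end.

Definition beyond_side (s : side) (a : M) : Prop :=
  match s with
  | Left => (Mx a <= Mx m)%nat
  | Right => (Mx m <= Mx a)%nat
  | Bottom => (My a <= My m)%nat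
  | Top => (My m <= My a)%nat
  end.

Definition side_open (s : side) (a : M) : Prop := side_glued s /\ beyond_side s a.

Definition side_value (s : side) (a : M) (q1 q2 : R) : R :=
  if excluded_middle_informative (side_open s a)
  then Rmin 2 (route X x s (INR (Mx a) + q1 - INR (Mx m)) (INR (My a) + q2 - INR (My m)))
  else 2.

Definition boundary_potential (a : M) (q1 q2 : R) : R :=
  min_sides (fun s => side_value s a q1 q2).

Lemma side_value_range s a q1 q2 : 0 <= side_value s a q1 q2 <= 2.
Proof.
  unfold side_value; destruct excluded_middle_informative; [|lra].
  pose proof (route_nonneg X x s (INR (Mx a) + q1 - INR (Mx m)) (INR (My a) + q2 - INR (My m))).
  unfold Rmin; destruct Rle_dec; lra.
Qed.

Lemma side_value_lipschitz s a p1 p2 q1 q2 :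
  side_value s a p1 p2 <= side_value s a q1 q2 + (Rabs (p1 - q1) + Rabs (p2 - q2)).
Proof.
  unfold side_value; destruct excluded_middle_informative.
  - apply Rmin_le_add; [|pose proof (Rabs_pos (p1 - q1)); pose proof (Rabs_pos (p2 - q2)); lra].
    pose proof (route_lipschitz X x s (INR (Mx a) + p1 - INR (Mx m)) (INR (My a) + p2 - INR (My m))
                  (INR (Mx a) + q1 - INR (Mx m)) (INR (My a) + q2 - INR (My m))) as Hr.
    replace (INR (Mx a) + p1 - INR (Mx m) - (INR (Mx a) + q1 - INR (Mx m))) with (p1 - q1) in Hr by ring.
    replace (INR (My a) + p2 - INR (My m) - (INR (My a) + q2 - INR (My m))) with (p2 - q2) in Hr by ring.
    match type of Hr with Rabs ?d <= _ => pose proof (Rabs_bounds d) end; lra.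
  - pose proof (Rabs_pos (p1 - q1)); pose proof (Rabs_pos (p2 - q2)); lra.
Qed.

Lemma boundary_potential_range a q1 q2 : 0 <= boundary_potential a q1 q2 <= 2.
Proof.
  split.
  - apply min_sides_ge; intros s; apply side_value_range.
  - eapply Rle_trans; [apply (min_sides_le _ Left)|]; apply side_value_range.
Qed.

Lemma boundary_potential_lipschitz a p1 p2 q1 q2 :
  boundary_potential a p1 p2 <= boundary_potential a q1 q2 + (Rabs (p1 - q1) + Rabs (p2 - q2)).
Proof. apply min_sides_le_add; intros s; apply side_value_lipschitz. Qed.

(* An offer switches only between two copies of the middle column (or row),
   which has copies at heights 0 and 2 only: the common point is then at
   offset 1 across the side and at least 1 beyond its ends. *)
Lemma side_open_jump s a b p1 p2 q1 q2 :
  adjacent a b -> a <> m -> b <> m ->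
  unit_square p1 p2 -> unit_square q1 q2 -> same_point a p1 p2 b q1 q2 ->
  side_open s a -> ~ side_open s b ->
  2 <= route X x s (INR (Mx a) + p1 - INR (Mx m)) (INR (My a) + p2 - INR (My m)).
Proof.
  intros Hadj Ham Hbm Hp Hq E [Hglued Ha] Hb.
  assert (Hb' : ~ beyond_side s b) by (intros Hb'; apply Hb; split; assumption); clear Hb.
  eapply Rle_trans; [|apply route_ge_offsets].
  pose proof (M_inM b) as Ib.
  destruct (contact_cases a b p1 p2 q1 q2 Hadj Hp Hq E)
    as [[[[Hx Hp0]|[Hx Hp0]] [Hy _]]|[[[Hy Hp0]|[Hy Hp0]] [Hx _]]];
  destruct Hp as [Hp1 Hp2]; destruct s; simpl in Hglued, Ha, Hb' |- *; try (clear Ib Hglued; lia);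
  unfold inM in Hglued, Ib;
  first
    [ assert (Hax : (Mx a = Mx m /\ Mx m = 1)%nat) by lia; rewrite (proj1 Hax);
      pose proof (far_offset _ _ p2 Hp2 (middle_column_far a m (proj1 Hax) (proj2 Hax) Ham))
    | assert (Hay : (My a = My m /\ My m = 1)%nat) by lia; rewrite (proj1 Hay);
      pose proof (far_offset _ _ p1 Hp1 (middle_row_far a m (proj1 Hay) (proj2 Hay) Ham)) ];
  match goal with |- 2 <= Rabs ?n + _ => pose proof (Rabs_bounds n) end; lra.
Qed.

Lemma side_value_glue s a b p1 p2 q1 q2 :
  adjacent a b -> a <> m -> b <> m ->
  unit_square p1 p2 -> unit_square q1 q2 -> same_point a p1 p2 b q1 q2 ->
  side_value s a p1 p2 = side_value s b q1 q2.
Proof.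
  intros Hadj Ham Hbm Hp Hq E; pose proof E as [E1 E2]; unfold side_value.
  replace (INR (Mx b) + q1 - INR (Mx m)) with (INR (Mx a) + p1 - INR (Mx m)) by lra.
  replace (INR (My b) + q2 - INR (My m)) with (INR (My a) + p2 - INR (My m)) by lra.
  destruct (excluded_middle_informative (side_open s a)) as [Ha|Ha];
  destruct (excluded_middle_informative (side_open s b)) as [Hb|Hb]; try reflexivity;
    rewrite Rmin_left; try reflexivity.
  - apply (side_open_jump s a b p1 p2 q1 q2); assumption.
  - replace (INR (Mx a) + p1 - INR (Mx m)) with (INR (Mx b) + q1 - INR (Mx m)) by lra.
    replace (INR (My a) + p2 - INR (My m)) with (INR (My b) + q2 - INR (My m)) by lra.
    apply (side_open_jump s b a q1 q2 p1 p2); auto using adjacent_sym, same_point_sym.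
Qed.

Lemma boundary_potential_glue a b p1 p2 q1 q2 :
  adjacent a b -> a <> m -> b <> m ->
  unit_square p1 p2 -> unit_square q1 q2 -> same_point a p1 p2 b q1 q2 ->
  boundary_potential a p1 p2 = boundary_potential b q1 q2.
Proof. intros; apply min_sides_ext; intros s; apply side_value_glue; assumption. Qed.

Lemma open_side_contact s n p1 p2 q1 q2 :
  adjacent m n -> unit_square p1 p2 -> unit_square q1 q2 -> same_point m p1 p2 n q1 q2 ->
  beyond_side s n ->
  normal_offset s p1 p2 = 0 \/ tangent_coord s p1 p2 = 0 \/ tangent_coord s p1 p2 = 1.
Proof.
  intros Hadj Hp Hq E Hs.
  destruct (contact_cases m n p1 p2 q1 q2 Hadj Hp Hq E)
    as [[[[Hx Hp0]|[Hx Hp0]] _]|[[[Hy Hp0]|[Hy Hp0]] _]];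
  destruct s; simpl in Hs |- *; first [lra | lia].
Qed.

Lemma facing_side_open n p1 p2 q1 q2 :
  adjacent m n -> unit_square p1 p2 -> unit_square q1 q2 -> same_point m p1 p2 n q1 q2 ->
  exists s, side_open s n /\ normal_offset s p1 p2 = 0.
Proof.
  intros Hadj Hp Hq E.
  pose proof (M_inM n).
  destruct (contact_cases m n p1 p2 q1 q2 Hadj Hp Hq E)
    as [[[[Hx Hp0]|[Hx Hp0]] [Hy _]]|[[[Hy Hp0]|[Hy Hp0]] [Hx _]]];
  [exists Left | exists Right | exists Bottom | exists Top];
  unfold side_open, inM in *; simpl; repeat split; first [lra | lia].
Qed.

Lemma boundary_potential_neighbour n p1 p2 q1 q2 :
  adjacent m n -> unit_square p1 p2 -> unit_square q1 q2 -> same_point m p1 p2 n q1 q2 ->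
  boundary_potential n q1 q2 = dX X x (SX X p1 p2).
Proof.
  intros Hadj Hp Hq E; pose proof E as [E1 E2].
  assert (Hu : INR (Mx n) + q1 - INR (Mx m) = p1) by lra.
  assert (Hv : INR (My n) + q2 - INR (My m) = p2) by lra.
  unfold boundary_potential, side_value; rewrite Hu, Hv.
  apply Rle_antisym.
  - destruct (facing_side_open n p1 p2 q1 q2 Hadj Hp Hq E) as (s & Hs & Hn).
    eapply Rle_trans; [apply (min_sides_le _ s)|]; simpl.
    destruct excluded_middle_informative; [|contradiction].
    rewrite route_on_side by assumption; apply Rmin_r.
  - apply min_sides_ge; intros s.
    pose proof (dX_le2 X x (SX X p1 p2)).
    destruct excluded_middle_informative as [Hs|]; [|lra].
    apply Rmin_glb; [lra|].
    apply route_ge_dist; [exact Hp|].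
    exact (open_side_contact s n p1 p2 q1 q2 Hadj Hp Hq E (proj2 Hs)).
Qed.

End BoundaryPotential.

Section Potential.
Variables (X : SquaMS) (x : X) (m : M).

Definition on_boundary (q : R * R) : Prop := inM0 (fst q) (snd q).

Definition boundary_embedding (q : R * R) : X := SX X (fst q) (snd q).

Definition boundary_function (a : M) (q : R * R) : R :=
  boundary_potential X x m a (fst q) (snd q).

Lemma boundary_function_nonneg a q : on_boundary q -> 0 <= boundary_function a q.
Proof. intros _; apply boundary_potential_range. Qed.

Lemma on_boundary_origin : on_boundary (0, 0).
Proof. unfold on_boundary, inM0; simpl; lra. Qed.

Definition copy_extension (a : M) : X -> R :=
  mcshane on_boundary boundary_embedding (boundary_function a)
    (boundary_function_nonneg a) on_boundary_origin.

Definition potential (z : M * X) : R :=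
  if same_copy (fst z) m then dX X x (snd z) else Rmin 2 (copy_extension (fst z) (snd z)).

Lemma potential_home u : potential (m, u) = dX X x u.
Proof. unfold potential; simpl; now destruct (same_copy_spec m m). Qed.

Lemma potential_range z : 0 <= potential z <= 2.
Proof.
  unfold potential; destruct same_copy.
  - split; [apply dX_nonneg | apply dX_le2].
  - assert (0 <= copy_extension (fst z) (snd z)) by apply mcshane_nonneg.
    unfold Rmin; destruct Rle_dec; lra.
Qed.

Lemma potential_lipschitz a u v : Rabs (potential (a, u) - potential (a, v)) <= dX X u v.
Proof.
  unfold potential; simpl; destruct same_copy; [apply dX_lipschitz|].
  assert (Huv : copy_extension a u <= copy_extension a v + dX X u v)
    by apply mcshane_lipschitz.
  assert (Hvu : copy_extension a v <= copy_extension a u + dX X v u)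
    by apply mcshane_lipschitz.
  pose proof (dX_nonneg X u v) as Hd; rewrite (dX_sym X v u) in Hvu.
  pose proof (Rmin_le_add 2 _ _ _ Huv Hd); pose proof (Rmin_le_add 2 _ _ _ Hvu Hd).
  apply Rabs_le; lra.
Qed.

Lemma potential_on_boundary a p1 p2 :
  a <> m -> inM0 p1 p2 -> potential (a, SX X p1 p2) = boundary_potential X x m a p1 p2.
Proof.
  intros Ham Hp; unfold potential; simpl.
  destruct (same_copy_spec a m); [contradiction|].
  assert (Hext : copy_extension a (SX X p1 p2) = boundary_potential X x m a p1 p2).
  { apply (mcshane_extends X _ on_boundary boundary_embedding (boundary_function a)
             _ _ on_boundary_origin (p1, p2)); [|exact Hp].
    intros [r s] [t u] Hrs Htu; unfold boundary_function, boundary_embedding; simpl in *.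
    pose proof (boundary_potential_lipschitz X x m a r s t u).
    pose proof (sq2 X r s t u Hrs Htu); lra. }
  rewrite Hext; apply Rmin_right, boundary_potential_range.
Qed.

Lemma potential_gen_rel z w : gen_rel X z w -> potential z = potential w.
Proof.
  intros (a & b & p1 & p2 & q1 & q2 & Hab & Hp & Hq & -> & -> & E1 & E2).
  assert (E : same_point a p1 p2 b q1 q2) by (split; lra).
  pose proof (inM0_unit_square _ _ Hp); pose proof (inM0_unit_square _ _ Hq).
  destruct (same_copy_spec a m) as [->|Ham], (same_copy_spec b m) as [->|Hbm].
  - exfalso; exact (adjacent_irrefl m Hab).
  - rewrite potential_home, potential_on_boundary by assumption.
    symmetry; apply (boundary_potential_neighbour X x m b p1 p2 q1 q2); assumption.
  - rewrite potential_home, potential_on_boundary by assumption.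
    apply (boundary_potential_neighbour X x m a q1 q2 p1 p2); auto using adjacent_sym, same_point_sym.
  - rewrite !potential_on_boundary by assumption.
    apply boundary_potential_glue; assumption.
Qed.

Lemma potential_glue_equiv z w : glue_equiv X z w -> potential z = potential w.
Proof.
  induction 1; [now apply potential_gen_rel | reflexivity | now symmetry | congruence].
Qed.

Lemma potential_step z w : Rabs (potential z - potential w) <= 3 * step_cost X z w.
Proof.
  unfold step_cost; destruct excluded_middle_informative as [Hzw|_].
  - rewrite (potential_glue_equiv z w Hzw), Rminus_diag, Rabs_R0; lra.
  - destruct z as [a u], w as [b v]; unfold dMX; simpl.
    change (Nat.eqb (Mx a) (Mx b) && Nat.eqb (My a) (My b))%bool with (same_copy a b).
    destruct (same_copy_spec a b) as [<-|_].
    + pose proof (potential_lipschitz a u v); lra.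
    + pose proof (potential_range (a, u)); pose proof (potential_range (b, v)).
      apply Rabs_le; lra.
Qed.

End Potential.

Lemma score_ge_potential_gap (X : SquaMS) (F : M * X -> R) :
  (forall z w, Rabs (F z - F w) <= 3 * step_cost X z w) ->
  forall (z : nat -> M * X) (k : nat), Rabs (F (z 0%nat) - F (z k)) <= 3 * score X z k.
Proof.
  intros HF z k; induction k as [|k IH]; simpl.
  - rewrite Rminus_diag, Rabs_R0; lra.
  - pose proof (HF (z k) (z (S k))).
    pose proof (Rabs_triang (F (z 0%nat) - F (z k)) (F (z k) - F (z (S k)))).
    replace (F (z 0%nat) - F (z k) + (F (z k) - F (z (S k)))) with (F (z 0%nat) - F (z (S k)))
      in * by ring.
    lra.
Qed.

Theorem mainTheorem12 (X : SquaMS) (m : M) (x y : X)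
  (z : nat -> M * X) (k : nat) :
  z 0%nat = (m, x) -> z k = (m, y) ->
  score X z k >= dX X x y / 3.
Proof.
  intros Hz0 Hzk.
  pose proof (score_ge_potential_gap X _ (potential_step X x m) z k) as Hgap.
  rewrite Hz0, Hzk, !potential_home, dX_self, Rabs_minus_sym, Rminus_0_r in Hgap.
  rewrite Rabs_right in Hgap by apply Rle_ge, dX_nonneg.
  lra.
Qed.
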